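(* Let $f(x|\eta)$, $\eta=(\theta,v,m)$, be the skew-normal kernel and let $\eta_1,\dots,\eta_{k_0}$ be distinct parameters with $v_j=\sigma_j^2>0$. The $4k_0$ functions $$\Big\{f(\cdot|\eta_j),\ \frac{\partial f}{\partial\theta}(\cdot|\eta_j),\ \frac{\partial f}{\partial v}(\cdot|\eta_j),\ \frac{\partial f}{\partial m}(\cdot|\eta_j):\ j=1,\dots,k_0\Big\}$$ are linearly dependent (as functions of $x\in\mathbb{R}$, almost everywhere) if and only if $P_1(\eta_1,\dots,\eta_{k_0})=0$ or $P_2(\eta_1,\dots,\eta_{k_0})=0$, where $$P_1=\prod_{j=1}^{k_0}m_j,\qquad P_2=\prod_{1\le i\neq j\le k_0}\Big\{(\theta_i-\theta_j)^2+\big[\sigma_i^2(1+m_j^2)-\sigma_j^2(1+m_i^2)\big]^2\Big\}.$$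
   Context: Skew-normal kernel: $f(x|\theta,v,m)=\frac{2}{\sigma}\varphi\!\left(\frac{x-\theta}{\sigma}\right)\Phi\!\left(\frac{m(x-\theta)}{\sigma}\right)$ with $\sigma=\sqrt v$, $\varphi,\Phi$ the standard normal density and cdf. An empty product equals $1$. *)

From Stdlib Require Import Reals Lra Lia.
Open Scope R_scope.

Definition gauss (s : R) : R := exp (- (s * s) / 2).

Lemma gauss_continuity : continuity gauss.
Proof. unfold gauss. reg. Qed.

Lemma gauss_integrable (a b : R) (h : a <= b) : Riemann_integrable gauss a b.
Proof.
  apply continuity_implies_RiemannInt; [exact h|].
  intros x _; apply gauss_continuity.
Qed.

Definition phi (t : R) : R := gauss t / sqrt (2 * PI).

(* standard normal cdf: Phi t = 1/2 + (1/sqrt(2 pi)) * int_0^t exp(-s^2/2) ds *)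
Definition Phi (t : R) : R :=
  match Rle_dec 0 t with
  | left h => / 2 + / sqrt (2 * PI) * RiemannInt (gauss_integrable 0 t h)
  | right h => / 2 - / sqrt (2 * PI) *
      RiemannInt (gauss_integrable t 0 (Rlt_le _ _ (Rnot_le_lt _ _ h)))
  end.

Definition skn (x theta v m : R) : R :=
  2 / sqrt v * phi ((x - theta) / sqrt v) * Phi (m * (x - theta) / sqrt v).

Fixpoint Rsum_upto (n : nat) (f : nat -> R) : R :=
  match n with O => 0 | S k => Rsum_upto k f + f k end.
Fixpoint Rprod_upto (n : nat) (f : nat -> R) : R :=
  match n with O => 1 | S k => Rprod_upto k f * f k end.

(* Lebesgue-null subset of R: coverable by countably many open intervals
   of arbitrarily small total length *)
Definition negligible (S : R -> Prop) : Prop :=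
  forall eps : R, 0 < eps ->
    exists a b : nat -> R,
      (forall n, a n <= b n) /\
      (forall x, S x -> exists n, a n < x < b n) /\
      (forall N, sum_f_R0 (fun n => b n - a n) N <= eps).

Definition P1 (k0 : nat) (m : nat -> R) : R := Rprod_upto k0 m.

Definition P2 (k0 : nat) (theta v m : nat -> R) : R :=
  Rprod_upto k0 (fun i => Rprod_upto k0 (fun j =>
    if Nat.eqb i j then 1 else
      (theta i - theta j) ^ 2
      + (v i * (1 + m j ^ 2) - v j * (1 + m i ^ 2)) ^ 2)).

(* Write [Phi (- u) = lam + phi u * W u], so that [W] is essentially Mills' ratio and
   [W t = 1/t - 1/t^3 + 3/t^5 - 15/t^7 + O(t^-9)].  For [m <> 0] this turns every combination
   [a f + b df/dtheta + c df/dv + d df/dm] at [(theta, v, m)] into a sum of two Gaussian terms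
   [exp (- alpha y^2) * (q y + r y * W (mu y))], [y = x - theta], with quadratics [q], [r]: one of
   rate [1 / (2 v)] with [r = 0], and one of rate [(1 + m^2) / (2 v)] whose [r] is built from
   [a, b, c] and whose [q] is, once [a = b = c = 0], a multiple of [d y].
   In a sum of Gaussian terms vanishing for large [x], the class of smallest rate and, among those,
   largest centre dominates all other terms by a factor [exp (- eps x)]; its common profile is thus
   [O(x^-7)], which the expansion of [W] allows only if all its coefficients vanish, and one peels
   the classes off one by one.  When [P1 <> 0] and [P2 <> 0] the W-terms of distinct [eta_j] lie in
   distinct classes, which gives first [a = b = c = 0] and then [d = 0].  Conversely [m_j = 0] makes
   [df/dm] proportional to [df/dtheta], and equal [(theta, (1 + m^2) / v)] at [eta_i] and [eta_j]
   make the two [df/dm] proportional.  Almost-everywhere and everywhere dependence agree because a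
   continuous function vanishing off a null set vanishes identically (an interval is not null). *)

From Stdlib Require Import Reals Lra Lia List Psatz Classical.
From Coquelicot Require Import Coquelicot.
Import ListNotations.
Open Scope R_scope.

(** * The standard normal distribution *)

Lemma continuous_gauss x : continuous gauss x.
Proof. apply continuity_pt_filterlim, gauss_continuity. Qed.

Lemma ex_RInt_gauss a b : ex_RInt gauss a b.
Proof.
  apply (ex_RInt_continuous (V := R_CompleteNormedModule)); intros; apply continuous_gauss.
Qed.

Lemma Phi_RInt t : Phi t = / 2 + / sqrt (2 * PI) * RInt gauss 0 t.
Proof.
  unfold Phi; destruct (Rle_dec 0 t) as [h|h].
  - now rewrite RInt_Reals with (pr := gauss_integrable 0 t h).
  - rewrite <- RInt_Reals, <- (opp_RInt_swap gauss t 0) by apply ex_RInt_gauss.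
    unfold opp; simpl; ring.
Qed.

Lemma is_derive_Phi (t : R) : is_derive Phi t (phi t).
Proof.
  apply (is_derive_ext (fun t => / 2 + / sqrt (2 * PI) * RInt gauss 0 t)).
  { intros; symmetry; apply Phi_RInt. }
  auto_derive.
  - split; [apply ex_RInt_gauss|split; [|easy]].
    apply filter_forall; intros; apply gauss_continuity.
  - unfold phi, Rdiv; ring.
Qed.

Lemma Derive_Phi t : Derive Phi t = phi t.
Proof. apply is_derive_unique, is_derive_Phi. Qed.

Lemma ex_derive_Phi t : ex_derive Phi t.
Proof. eexists; apply is_derive_Phi. Qed.

Lemma gauss_opp y : gauss (- y) = gauss y.
Proof. unfold gauss; f_equal; field. Qed.

Lemma phi_opp y : phi (- y) = phi y.
Proof. unfold phi; now rewrite gauss_opp. Qed.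

Lemma RInt_gauss_opp t : RInt gauss 0 (- t) = - RInt gauss 0 t.
Proof.
  assert (E := RInt_comp_lin gauss (-1) 0 0 t (ex_RInt_gauss _ _)).
  replace (-1 * 0 + 0) with 0 in E by ring.
  replace (-1 * t + 0) with (- t) in E by ring.
  rewrite <- E, <- (RInt_opp (V := R_CompleteNormedModule)) by apply ex_RInt_gauss.
  apply RInt_ext; intros y _.
  replace (-1 * y + 0) with (- y) by ring.
  rewrite gauss_opp; unfold scal, opp; simpl; unfold mult; simpl; ring.
Qed.

Lemma sqrt_2PI_pos : 0 < sqrt (2 * PI).
Proof. apply sqrt_lt_R0; generalize PI_RGT_0; lra. Qed.

Lemma Phi_opp t : Phi (- t) = 1 - Phi t.
Proof. rewrite !Phi_RInt, RInt_gauss_opp; field; generalize sqrt_2PI_pos; lra. Qed.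

Lemma phi_pos t : 0 < phi t.
Proof. apply Rdiv_lt_0_compat; [apply exp_pos | apply sqrt_2PI_pos]. Qed.

Lemma is_derive_phi (t : R) : is_derive phi t (- t * phi t).
Proof.
  unfold phi, gauss; auto_derive; [easy|].
  unfold Rdiv; field; generalize sqrt_2PI_pos; lra.
Qed.

Lemma ex_derive_phi (t : R) : ex_derive phi t.
Proof. eexists; apply is_derive_phi. Qed.

Lemma Derive_phi (t : R) : Derive phi t = - t * phi t.
Proof. apply is_derive_unique, is_derive_phi. Qed.

(** * The Gaussian tail *)

Lemma nonincreasing_of_is_derive (f f' : R -> R) a0 :
  (forall t, a0 <= t -> is_derive f t (f' t)) -> (forall t, a0 <= t -> f' t <= 0) ->
  forall a b, a0 <= a -> a <= b -> f b <= f a.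
Proof.
  intros Hd Hneg a b ha [hab|<-]; [|lra].
  destruct (MVT_cor2 f f' a b hab) as [c [Hc hc]].
  { intros c hc; apply is_derive_Reals, Hd; lra. }
  assert (f' c <= 0) by (apply Hneg; lra). nra.
Qed.

Definition mills_series t := 1 / t - 1 / t ^ 3 + 3 / t ^ 5 - 15 / t ^ 7.

Definition mills_lo t := Phi (- t) - phi t * mills_series t.
Definition mills_hi t := phi t * (mills_series t + 105 / t ^ 9) - Phi (- t).

Lemma is_derive_mills_lo (t : R) : 0 < t -> is_derive mills_lo t (- phi t * (105 / t ^ 8)).
Proof.
  intros ht. unfold mills_lo, mills_series. auto_derive.
  - repeat split; auto using ex_derive_Phi, ex_derive_phi; apply Rgt_not_eq;
      repeat apply Rmult_lt_0_compat; lra.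
  - rewrite Derive_Phi, Derive_phi, phi_opp; field; lra.
Qed.

Lemma is_derive_mills_hi (t : R) : 0 < t -> is_derive mills_hi t (- phi t * (945 / t ^ 10)).
Proof.
  intros ht. unfold mills_hi, mills_series. auto_derive.
  - repeat split; auto using ex_derive_Phi, ex_derive_phi; apply Rgt_not_eq;
      repeat apply Rmult_lt_0_compat; lra.
  - rewrite Derive_Phi, Derive_phi, phi_opp; field; lra.
Qed.

Lemma mills_lo_plus_hi t : mills_lo t + mills_hi t = 105 * phi t / t ^ 9.
Proof. unfold mills_lo, mills_hi, Rdiv; ring. Qed.

Lemma mills_lo_hi_pos t : 1 <= t -> 0 < mills_lo t + mills_hi t.
Proof.
  intros ht; rewrite mills_lo_plus_hi.
  apply Rdiv_lt_0_compat; [generalize (phi_pos t); lra | apply pow_lt; lra].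
Qed.

Lemma mills_nonincreasing f df :
  (forall t, 0 < t -> is_derive f t (- phi t * df t)) -> (forall t, 1 <= t -> 0 <= df t) ->
  forall a b, 1 <= a -> a <= b -> f b <= f a.
Proof.
  intros Hd Hpos. apply (nonincreasing_of_is_derive f (fun t => - phi t * df t)).
  - intros t ht; apply Hd; lra.
  - intros t ht; generalize (phi_pos t) (Hpos t ht); nra.
Qed.

Lemma mills_lo_nonincreasing a b : 1 <= a -> a <= b -> mills_lo b <= mills_lo a.
Proof.
  apply (mills_nonincreasing _ (fun t => 105 / t ^ 8)); [exact is_derive_mills_lo|].
  intros t ht; apply Rlt_le, Rdiv_lt_0_compat; [lra | apply pow_lt; lra].
Qed.

Lemma mills_hi_nonincreasing a b : 1 <= a -> a <= b -> mills_hi b <= mills_hi a.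
Proof.
  apply (mills_nonincreasing _ (fun t => 945 / t ^ 10)); [exact is_derive_mills_hi|].
  intros t ht; apply Rlt_le, Rdiv_lt_0_compat; [lra | apply pow_lt; lra].
Qed.

Lemma mills_lo_opp_le_hi s t : 1 <= s -> 1 <= t -> - mills_lo s <= mills_hi t.
Proof.
  intros hs ht; destruct (Rle_dec s t).
  - generalize (mills_lo_nonincreasing s t hs r) (mills_lo_hi_pos t ht); lra.
  - generalize (mills_hi_nonincreasing t s ht ltac:(lra)) (mills_lo_hi_pos s hs); lra.
Qed.

(* The constant [lam] is in fact 0; only its existence is used. *)
Lemma Phi_tail_expansion : exists lam, forall t, 1 <= t ->
  0 <= Phi (- t) - lam - phi t * mills_series t <= 105 * phi t / t ^ 9.
Proof.
  set (E := fun r => exists s, 1 <= s /\ r = - mills_lo s).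
  destruct (completeness E) as [l [Hub Hlub]].
  - exists (mills_hi 1); intros r [s [hs ->]]; apply mills_lo_opp_le_hi; lra.
  - exists (- mills_lo 1), 1; split; [lra | reflexivity].
  - exists (- l); intros t ht.
    assert (- mills_lo t <= l) by (apply Hub; exists t; auto).
    assert (l <= mills_hi t) by (apply Hlub; intros r [s [hs ->]]; now apply mills_lo_opp_le_hi).
    rewrite <- mills_lo_plus_hi; unfold mills_lo in *; lra.
Qed.

Definition mills_approx (W : R -> R) :=
  forall t, 1 <= t -> Rabs (W t - mills_series t) <= 105 / t ^ 9.

Lemma exists_mills_W : exists lam W, mills_approx W /\ forall u, Phi (- u) = lam + phi u * W u.
Proof.
  destruct Phi_tail_expansion as [lam Hlam].
  exists lam, (fun u => (Phi (- u) - lam) / phi u); split.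
  - intros t ht; destruct (Hlam t ht) as [l1 l2]; assert (hp := phi_pos t).
    replace ((Phi (- t) - lam) / phi t - mills_series t)
      with ((Phi (- t) - lam - phi t * mills_series t) / phi t) by (field; lra).
    assert (0 < t ^ 9) by (apply pow_lt; lra).
    apply Rabs_le; split.
    + assert (0 <= 105 / t ^ 9) by (apply Rlt_le, Rdiv_lt_0_compat; lra).
      assert (0 <= (Phi (- t) - lam - phi t * mills_series t) / phi t)
        by (apply Rle_mult_inv_pos; lra).
      lra.
    + apply Rle_div_l; [lra|]; unfold Rdiv in *; lra.
  - intros u; field; generalize (phi_pos u); lra.
Qed.

Lemma Rabs_W_le W : mills_approx W -> forall t, 1 <= t -> Rabs (W t) <= 125.
Proof.
  intros HW t ht. specialize (HW t ht).
  assert (hi : forall k, 0 < / t ^ k <= 1).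
  { intros k; split; [apply Rinv_0_lt_compat, pow_lt; lra|].
    rewrite <- Rinv_1; apply Rinv_le_contravar; [lra | now apply pow_R1_Rle]. }
  unfold mills_series, Rdiv in HW.
  destruct (hi 1%nat), (hi 3%nat), (hi 5%nat), (hi 7%nat), (hi 9%nat); rewrite pow_1 in *.
  apply Rabs_le; apply Rabs_le_between in HW; lra.
Qed.

(** * Quadratic combinations of the tail expansion *)

Definition for_large (P : R -> Prop) := exists X, forall x, X <= x -> P x.

Lemma for_large_ge c : for_large (fun x => c <= x).
Proof. now exists c. Qed.

Lemma for_large_and (P Q : R -> Prop) :
  for_large P -> for_large Q -> for_large (fun x => P x /\ Q x).
Proof.
  intros [X HP] [Y HQ]; exists (Rmax X Y); intros x hx.
  split; [apply HP | apply HQ]; generalize (Rmax_l X Y) (Rmax_r X Y); lra.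
Qed.

Lemma for_large_imp (P Q : R -> Prop) : (forall x, P x -> Q x) -> for_large P -> for_large Q.
Proof. intros H [X HP]; exists X; auto. Qed.

Lemma for_large_imp_ge c (P Q : R -> Prop) :
  (forall x, c <= x -> P x -> Q x) -> for_large P -> for_large Q.
Proof.
  intros H HP; apply (for_large_imp (fun x => P x /\ c <= x)); [intros x []; auto|].
  now apply for_large_and, for_large_ge.
Qed.

Lemma for_large_shift c (P : R -> Prop) : for_large P -> for_large (fun y => P (c + y)).
Proof. intros [X HX]; exists (X - c); intros y hy; apply HX; lra. Qed.

Fixpoint horner (l : list R) (y : R) : R :=
  match l with [] => 0 | c :: l' => c + y * horner l' y end.

Lemma horner_all_zero l y : (forall c, In c l -> c = 0) -> horner l y = 0.
Proof.
  induction l as [|c l IH]; intros H; simpl; [easy|].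
  rewrite (H c), IH; [ring | intros; apply H | ]; simpl; auto.
Qed.

Lemma eq0_of_le_inv c K : for_large (fun y => Rabs c <= K / y) -> c = 0.
Proof.
  intros [Y H]. destruct (Req_dec c 0) as [|hc]; [easy | exfalso].
  assert (hc' : 0 < Rabs c) by now apply Rabs_pos_lt.
  set (y := Rmax Y 1 + Rabs K / Rabs c).
  assert (hKc : 0 <= Rabs K / Rabs c) by (apply Rle_mult_inv_pos; [apply Rabs_pos | easy]).
  assert (hY := Rmax_l Y 1); assert (h1 := Rmax_r Y 1).
  assert (Ey : Rabs c * y = Rabs c * Rmax Y 1 + Rabs K) by (unfold y; field; lra).
  specialize (H y ltac:(unfold y; lra)).
  apply Rle_div_r in H; [|unfold y; lra].
  generalize (Rle_abs K); nra.
Qed.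

Lemma horner_tail_le_inv c l K :
  for_large (fun y => Rabs (horner (c :: l) y) <= K) ->
  for_large (fun y => Rabs (horner l y) <= (Rabs K + Rabs c) / y).
Proof.
  apply (for_large_imp_ge 1); intros y hy Hy; simpl in Hy.
  apply Rle_div_r; [lra|]. rewrite <- (Rabs_right y) at 2 by lra; rewrite <- Rabs_mult.
  replace (horner l y * y) with ((c + y * horner l y) - c) by ring.
  eapply Rle_trans; [apply Rabs_triang|]; rewrite Rabs_Ropp.
  generalize (Rle_abs K); lra.
Qed.

Lemma horner_zero_of_le_inv l K :
  for_large (fun y => Rabs (horner l y) <= K / y) -> forall c, In c l -> c = 0.
Proof.
  revert K; induction l as [|c l IH]; intros K HK; [easy|].
  assert (Hl : forall c, In c l -> c = 0).
  { apply (IH (Rabs (Rabs K) + Rabs c)), horner_tail_le_inv.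
    revert HK; apply (for_large_imp_ge 1); intros y hy Hy.
    eapply Rle_trans; [exact Hy|].
    apply Rle_div_l; [lra|]. generalize (Rle_abs K) (Rabs_pos K); nra. }
  intros c' [<-|hc']; [|auto].
  apply (eq0_of_le_inv c K); revert HK; apply for_large_imp.
  intros y; simpl; now rewrite (horner_all_zero l y Hl), Rmult_0_r, Rplus_0_r.
Qed.

Lemma horner_tail_zero_of_bounded c l K :
  for_large (fun y => Rabs (horner (c :: l) y) <= K) -> forall c', In c' l -> c' = 0.
Proof. intros HK; apply (horner_zero_of_le_inv l (Rabs K + Rabs c)), horner_tail_le_inv, HK. Qed.

Definition quad (c0 c1 c2 y : R) := c0 + c1 * y + c2 * y ^ 2.

Lemma Rabs_quad_le c0 c1 c2 y : 1 <= y ->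
  Rabs (quad c0 c1 c2 y) <= (Rabs c0 + Rabs c1 + Rabs c2) * y ^ 2.
Proof.
  intros hy; unfold quad.
  eapply Rle_trans; [apply Rabs_triang|].
  eapply Rle_trans; [apply Rplus_le_compat_r, Rabs_triang|].
  rewrite !Rabs_mult, (Rabs_right y), (Rabs_right (y ^ 2)) by (try apply Rle_ge, pow_le; lra).
  assert (y <= y ^ 2) by nra.
  generalize (Rabs_pos c0) (Rabs_pos c1) (Rabs_pos c2); nra.
Qed.

Lemma mills_coefficients_zero q0 q1 q2 a0 a1 a2 mu : 0 < mu ->
  - mu ^ 4 * a1 = 0 -> 3 * mu ^ 2 * a2 - mu ^ 4 * a0 = 0 -> 3 * mu ^ 2 * a0 - 15 * a2 = 0 ->
  mu ^ 6 * a1 + mu ^ 7 * q0 = 0 -> mu ^ 6 * a2 + mu ^ 7 * q1 = 0 -> mu ^ 7 * q2 = 0 ->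
  q0 = 0 /\ q1 = 0 /\ q2 = 0 /\ a0 = 0 /\ a1 = 0 /\ a2 = 0.
Proof.
  intros hmu e1 e2 e3 e4 e5 e6.
  assert (m2 : 0 < mu ^ 2) by (apply pow_lt; lra).
  assert (m4 : mu ^ 4 = mu ^ 2 * mu ^ 2) by ring.
  assert (m7 : 0 < mu ^ 7) by (apply pow_lt; lra).
  assert (ha1 : a1 = 0) by (apply Rmult_integral in e1 as [|]; nra).
  assert (ha2 : a2 = 0).
  { assert (h : mu ^ 2 * a2 = 0) by (rewrite m4 in e2; nra).
    apply Rmult_integral in h as [|]; lra. }
  subst a1 a2.
  assert (ha0 : a0 = 0).
  { assert (h : 3 * mu ^ 2 * a0 = 0) by lra; apply Rmult_integral in h as [|]; lra. }
  subst a0; repeat split; auto; [ | | apply Rmult_integral in e6 as [|]]; nra.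
Qed.

(* The list holds the coefficients of [y ^ 0 .. y ^ 9] in
   [mu^7 y^7 (quad q y + quad a y * mills_series (mu y))]. *)
Lemma mills_series_combination_zero q0 q1 q2 a0 a1 a2 mu K : 0 < mu ->
  for_large (fun y =>
    Rabs (quad q0 q1 q2 y + quad a0 a1 a2 y * mills_series (mu * y)) <= K / y ^ 7) ->
  q0 = 0 /\ q1 = 0 /\ q2 = 0 /\ a0 = 0 /\ a1 = 0 /\ a2 = 0.
Proof.
  intros hmu HK.
  set (tail := [-15 * a1; 3 * mu^2 * a0 - 15 * a2; 3 * mu^2 * a1; 3 * mu^2 * a2 - mu^4 * a0;
     - mu^4 * a1; mu^6 * a0 - mu^4 * a2; mu^6 * a1 + mu^7 * q0; mu^6 * a2 + mu^7 * q1;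
     mu^7 * q2]).
  assert (Hb : for_large (fun y => Rabs (horner (-15 * a0 :: tail) y) <= mu ^ 7 * K)).
  { revert HK; apply (for_large_imp_ge 1); intros y hy Hy.
    replace (horner _ y) with
      (mu ^ 7 * y ^ 7 * (quad q0 q1 q2 y + quad a0 a1 a2 y * mills_series (mu * y)))
      by (unfold quad, mills_series, tail; simpl; field; lra).
    rewrite Rabs_mult, Rabs_right by (apply Rle_ge, Rmult_le_pos; apply pow_le; lra).
    apply Rle_div_r in Hy; [|apply pow_lt; lra].
    assert (0 < mu ^ 7) by (apply pow_lt; lra). nra. }
  assert (Hz := horner_tail_zero_of_bounded _ _ _ Hb); unfold tail in Hz; simpl In in Hz.
  apply (mills_coefficients_zero _ _ _ _ _ _ mu hmu); apply Hz; tauto.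
Qed.

Lemma one_le_mul_of_inv_le mu y : 0 < mu -> / mu <= y -> 1 <= mu * y.
Proof.
  intros hmu hy. apply (Rmult_le_compat_l mu) in hy; [|lra].
  now rewrite Rinv_r in hy by lra.
Qed.

Lemma W_combination_zero W q0 q1 q2 a0 a1 a2 mu K : mills_approx W -> 0 < mu ->
  for_large (fun y => Rabs (quad q0 q1 q2 y + quad a0 a1 a2 y * W (mu * y)) <= K / y ^ 7) ->
  q0 = 0 /\ q1 = 0 /\ q2 = 0 /\ a0 = 0 /\ a1 = 0 /\ a2 = 0.
Proof.
  intros HW hmu HK.
  set (A := Rabs a0 + Rabs a1 + Rabs a2).
  apply (mills_series_combination_zero _ _ _ _ _ _ mu (K + A * 105 / mu ^ 9) hmu).
  revert HK; apply (for_large_imp_ge (Rmax 1 (/ mu))); intros y hy Hy.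
  assert (h1 := Rmax_l 1 (/ mu)); assert (h2 := Rmax_r 1 (/ mu)).
  assert (hmy : 1 <= mu * y) by (apply one_le_mul_of_inv_le; lra).
  assert (Herr : Rabs (quad a0 a1 a2 y * (W (mu * y) - mills_series (mu * y)))
                 <= A * 105 / mu ^ 9 / y ^ 7).
  { rewrite Rabs_mult.
    apply (Rle_trans _ (A * y ^ 2 * (105 / (mu * y) ^ 9))).
    - apply Rmult_le_compat; [apply Rabs_pos | apply Rabs_pos | |].
      + apply Rabs_quad_le; lra.
      + now apply HW.
    - right; field; lra. }
  replace (quad q0 q1 q2 y + quad a0 a1 a2 y * mills_series (mu * y)) with
    ((quad q0 q1 q2 y + quad a0 a1 a2 y * W (mu * y))
     - quad a0 a1 a2 y * (W (mu * y) - mills_series (mu * y))) by ring.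
  eapply Rle_trans; [apply Rabs_triang|]; rewrite Rabs_Ropp.
  unfold Rdiv in *; lra.
Qed.

(** * Gaussian terms *)

Lemma exp_mult_nat n a : exp (INR n * a) = exp a ^ n.
Proof.
  induction n as [|n IH]; [now rewrite Rmult_0_l, exp_0|].
  rewrite S_INR, Rmult_plus_distr_r, exp_plus, IH, Rmult_1_l; simpl; ring.
Qed.

Lemma for_large_pow_le_exp eps P : 0 < eps -> 0 <= P ->
  for_large (fun y => P * y ^ 9 <= exp (eps * y)).
Proof.
  intros he hP. set (c := (eps / 10) ^ 10).
  assert (hc : 0 < c) by (apply pow_lt; lra).
  exists (Rmax 1 (P / c)); intros y hy.
  assert (h1 := Rmax_l 1 (P / c)); assert (h2 := Rmax_r 1 (P / c)).
  assert (Hexp : (eps * y / 10) ^ 10 <= exp (eps * y)).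
  { replace (eps * y) with (INR 10 * (eps * y / 10)) at 2 by (simpl; field).
    rewrite exp_mult_nat; apply pow_incr; split; [apply Rmult_le_pos; nra|].
    generalize (exp_ineq1_le (eps * y / 10)); lra. }
  replace ((eps * y / 10) ^ 10) with (c * y * y ^ 9) in Hexp by (unfold c; field).
  assert (hPy : P / c <= y) by lra; apply Rle_div_l in hPy; [|easy].
  apply (Rle_trans _ (y * c * y ^ 9)); [|lra].
  apply Rmult_le_compat_r; [apply pow_le|]; lra.
Qed.

Record gterm := GTerm {
  grate : R; gcenter : R;
  gq0 : R; gq1 : R; gq2 : R;
  ga0 : R; ga1 : R; ga2 : R;
  gscale : R }.

Definition profile W u y :=
  quad (gq0 u) (gq1 u) (gq2 u) y + quad (ga0 u) (ga1 u) (ga2 u) y * W (gscale u * y).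

Definition geval W u x := exp (- grate u * (x - gcenter u) ^ 2) * profile W u (x - gcenter u).

Definition gsum W l x := fold_right (fun u s => geval W u x + s) 0 l.

Definition no_W_part u := ga0 u = 0 /\ ga1 u = 0 /\ ga2 u = 0.

Definition same_class u v := grate u = grate v /\ gcenter u = gcenter v.

Definition dominates ts u :=
  grate ts < grate u \/ (grate ts = grate u /\ gcenter u < gcenter ts).

Definition profile_size u :=
  Rabs (gq0 u) + Rabs (gq1 u) + Rabs (gq2 u) + 125 * (Rabs (ga0 u) + Rabs (ga1 u) + Rabs (ga2 u)).

Lemma profile_size_nonneg u : 0 <= profile_size u.
Proof.
  unfold profile_size; generalize (Rabs_pos (gq0 u)) (Rabs_pos (gq1 u)) (Rabs_pos (gq2 u))
    (Rabs_pos (ga0 u)) (Rabs_pos (ga1 u)) (Rabs_pos (ga2 u)); lra.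
Qed.

Lemma Rabs_profile_le W u s : mills_approx W -> 0 < gscale u -> 1 <= s -> / gscale u <= s ->
  Rabs (profile W u s) <= profile_size u * s ^ 2.
Proof.
  intros HW hmu h1 h2; unfold profile, profile_size.
  assert (hW := Rabs_W_le W HW _ (one_le_mul_of_inv_le _ _ hmu h2)).
  assert (hq := Rabs_quad_le (gq0 u) (gq1 u) (gq2 u) s h1).
  assert (ha := Rabs_quad_le (ga0 u) (ga1 u) (ga2 u) s h1).
  eapply Rle_trans; [apply Rabs_triang|]; rewrite Rabs_mult.
  assert (Rabs (quad (ga0 u) (ga1 u) (ga2 u) s) * Rabs (W (gscale u * s)) <=
          (Rabs (ga0 u) + Rabs (ga1 u) + Rabs (ga2 u)) * s ^ 2 * 125)
    by (apply Rmult_le_compat; auto using Rabs_pos).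
  lra.
Qed.

Lemma exponent_gap ts u : 0 < grate u -> dominates ts u ->
  exists eps, 0 < eps /\ for_large (fun y =>
    - grate u * (y + (gcenter ts - gcenter u)) ^ 2 <= - grate ts * y ^ 2 - eps * y).
Proof.
  intros ha hdom; set (d := gcenter ts - gcenter u).
  destruct hdom as [hlt | [heq hc]].
  - exists 1; split; [lra|].
    exists (Rmax 0 ((2 * grate u * Rabs d + 1) / (grate u - grate ts))); intros y hy.
    assert (h0 := Rmax_l 0 ((2 * grate u * Rabs d + 1) / (grate u - grate ts))).
    assert (h1 := Rmax_r 0 ((2 * grate u * Rabs d + 1) / (grate u - grate ts))).
    assert (hyd : 2 * grate u * Rabs d + 1 <= (grate u - grate ts) * y).
    { rewrite (Rmult_comm _ y); apply Rle_div_l; lra. }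
    assert (- Rabs d <= d) by (generalize (Rle_abs (- d)); rewrite Rabs_Ropp; lra).
    assert (- (2 * grate u * Rabs d) * y <= 2 * grate u * d * y)
      by (apply Rmult_le_compat_r; nra).
    nra.
  - exists (2 * grate u * d); split; [unfold d; nra|].
    exists 0; intros y hy; rewrite <- heq; nra.
Qed.

Lemma geval_dominated W ts u : mills_approx W -> 0 < grate u -> 0 < gscale u -> dominates ts u ->
  for_large (fun y => Rabs (geval W u (gcenter ts + y)) <= exp (- grate ts * y ^ 2) / y ^ 7).
Proof.
  intros HW ha hmu hdom.
  assert (hB := profile_size_nonneg u); set (B := profile_size u) in *.
  destruct (exponent_gap ts u ha hdom) as [eps [heps Hgap]].
  assert (Hpoly := for_large_pow_le_exp eps (4 * B) heps ltac:(lra)).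
  generalize (for_large_and _ _ Hgap Hpoly).
  set (d := gcenter ts - gcenter u) in *.
  apply (for_large_imp_ge (1 + Rabs d + / gscale u)); intros y hy [HE HP].
  assert (hinv : 0 < / gscale u) by now apply Rinv_0_lt_compat.
  assert (hd : - Rabs d <= d <= Rabs d)
    by (split; [generalize (Rle_abs (- d)); rewrite Rabs_Ropp | apply Rle_abs]; lra).
  unfold geval; replace (gcenter ts + y - gcenter u) with (y + d) by (unfold d; ring).
  assert (HF := Rabs_profile_le W u (y + d) HW hmu ltac:(lra) ltac:(lra)); fold B in HF.
  assert (hy7 : 0 < y ^ 7) by (apply pow_lt; lra).
  assert (he : 0 < exp (eps * y)) by apply exp_pos.
  rewrite Rabs_mult, Rabs_right by (apply Rle_ge, Rlt_le, exp_pos).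
  apply (Rle_trans _ (exp (- grate ts * y ^ 2) * exp (- (eps * y)) * (4 * B * y ^ 2))).
  { rewrite <- exp_plus, Rmult_assoc.
    apply Rmult_le_compat; [apply Rlt_le, exp_pos | apply Rabs_pos | |].
    - destruct (Req_dec (- grate u * (y + d) ^ 2) (- grate ts * y ^ 2 + - (eps * y))) as [e|];
        [now rewrite e | left; apply exp_increasing; lra].
    - assert ((y + d) ^ 2 <= 4 * y ^ 2) by (assert (0 <= y + d <= 2 * y) by lra; nra).
      apply (Rle_trans _ _ _ HF); nra. }
  rewrite exp_Ropp; unfold Rdiv; rewrite Rmult_assoc.
  apply Rmult_le_compat_l; [apply Rlt_le, exp_pos|].
  apply (Rmult_le_reg_r (exp (eps * y) * y ^ 7)); [now apply Rmult_lt_0_compat|].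
  replace (/ exp (eps * y) * (4 * B * y ^ 2) * (exp (eps * y) * y ^ 7)) with (4 * B * y ^ 9)
    by (field; lra).
  replace (/ y ^ 7 * (exp (eps * y) * y ^ 7)) with (exp (eps * y)) by (field; lra).
  exact HP.
Qed.

Lemma gsum_filter W f l x :
  gsum W l x = gsum W (filter f l) x + gsum W (filter (fun u => negb (f u)) l) x.
Proof. induction l as [|u l IH]; simpl; [ring|]; destruct (f u); simpl; rewrite IH; ring. Qed.

Lemma for_large_Rabs_gsum_le W c g l :
  (forall u, In u l -> for_large (fun y => Rabs (geval W u (c + y)) <= g y)) ->
  for_large (fun y => Rabs (gsum W l (c + y)) <= INR (length l) * g y).
Proof.
  induction l as [|u l IH]; intros H.
  - exists 0; intros y _; simpl; rewrite Rabs_R0; lra.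
  - generalize (for_large_and _ _ (IH (fun v hv => H v (or_intror hv))) (H u (or_introl eq_refl))).
    apply for_large_imp; intros y [Hl Hu]; simpl length; rewrite S_INR; simpl gsum.
    eapply Rle_trans; [apply Rabs_triang|]; fold (gsum W l (c + y)); lra.
Qed.

Lemma exists_dominant l : l <> [] ->
  exists ts, In ts l /\ forall u, In u l -> dominates ts u \/ same_class u ts.
Proof.
  unfold dominates, same_class.
  induction l as [|u [|v l] IH]; intros hl; [now contradiction hl| |].
  - exists u; split; [now left|]; intros w [<-|[]]; right; split; reflexivity.
  - destruct IH as [ts [hts Hts]]; [discriminate|].
    destruct (total_order_T (grate u) (grate ts)) as [[h|h]|h].
    + exists u; split; [now left|]; intros w [<-|hw]; [right; split; reflexivity|].
      destruct (Hts w hw) as [[|[]]|[]]; left; left; lra.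
    + destruct (Rle_dec (gcenter u) (gcenter ts)) as [h'|h'].
      * exists ts; split; [now right|]; intros w [<-|hw]; [|now apply Hts].
        destruct h' as [|]; [left; right|right]; split; auto.
      * exists u; split; [now left|]; intros w [<-|hw]; [right; split; reflexivity|].
        destruct (Hts w hw) as [[|[]]|[]]; [left; left; lra | left; right; lra | left; right; lra].
    + exists ts; split; [now right|]; intros w [<-|hw]; [left; left; lra | now apply Hts].
Qed.

Definition same_classb ts u : bool :=
  if Req_EM_T (grate u) (grate ts) then
    if Req_EM_T (gcenter u) (gcenter ts) then true else false
  else false.

Lemma same_classb_spec ts u : same_classb ts u = true <-> same_class u ts.
Proof.
  unfold same_classb, same_class.
  destruct (Req_EM_T (grate u) (grate ts)), (Req_EM_T (gcenter u) (gcenter ts));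
    intuition congruence.
Qed.

Lemma In_filter_same_classb ts l u :
  In u (filter (same_classb ts) l) <-> In u l /\ same_class u ts.
Proof. now rewrite filter_In, same_classb_spec. Qed.

Lemma In_filter_not_same_classb ts l u :
  In u (filter (fun v => negb (same_classb ts v)) l) <-> In u l /\ ~ same_class u ts.
Proof.
  rewrite filter_In, <- same_classb_spec.
  destruct (same_classb ts u); simpl; intuition discriminate.
Qed.

Definition coef_sum (f : gterm -> R) l := fold_right (fun u s => f u + s) 0 l.

Definition wsum W l y :=
  fold_right (fun u s => quad (ga0 u) (ga1 u) (ga2 u) y * W (gscale u * y) + s) 0 l.

Lemma gsum_same_class W ts C y : (forall u, In u C -> same_class u ts) ->
  gsum W C (gcenter ts + y) = exp (- grate ts * y ^ 2) *
    (quad (coef_sum gq0 C) (coef_sum gq1 C) (coef_sum gq2 C) y + wsum W C y).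
Proof.
  induction C as [|u C IH]; intros H; [simpl; unfold quad; ring|].
  destruct (H u (or_introl eq_refl)) as [e1 e2].
  unfold gsum, coef_sum, wsum in *; cbn [fold_right]; rewrite IH by (intros; apply H; now right).
  unfold geval, profile, quad; rewrite e1, e2; replace (gcenter ts + y - gcenter ts) with y by ring.
  ring.
Qed.

Lemma coef_sum_const f C u : (forall v, In v C -> v = u) -> coef_sum f C = INR (length C) * f u.
Proof.
  induction C as [|v C IH]; intros H; simpl; [ring|].
  rewrite IH, (H v); [destruct (length C); simpl; ring | now left | intros; apply H; now right].
Qed.

(* The W-part of a class is [n] copies of its unique W-term; [n] is tracked so that
   vanishing of the total forces vanishing of that term. *)
Lemma wsum_class_multiple W C :
  (forall u v, In u C -> In v C -> ~ no_W_part u -> ~ no_W_part v -> u = v) ->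
  (forall u, In u C -> 0 < gscale u) ->
  exists a0 a1 a2 mu, 0 < mu /\ (forall y, wsum W C y = quad a0 a1 a2 y * W (mu * y)) /\
    ((forall u, In u C -> no_W_part u) -> a0 = 0 /\ a1 = 0 /\ a2 = 0) /\
    (forall u, In u C -> ~ no_W_part u -> exists n, 1 <= n /\
       a0 = n * ga0 u /\ a1 = n * ga1 u /\ a2 = n * ga2 u /\ mu = gscale u).
Proof.
  unfold wsum, quad; induction C as [|u C IH]; intros Huniq Hmu.
  { exists 0, 0, 0, 1; repeat split; [lra | intros; simpl; ring | intros _ []]. }
  destruct IH as [a0 [a1 [a2 [mu [hmu [Hs [Hz Hn]]]]]]];
    [intros; apply Huniq; simpl; auto | intros; apply Hmu; simpl; auto |].
  destruct (classic (no_W_part u)) as [hu|hu].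
  - exists a0, a1, a2, mu; split; [easy | split; [|split]].
    + intros y; simpl; rewrite Hs; destruct hu as [-> [-> ->]]; ring.
    + intros Hall; apply Hz; intros; apply Hall; simpl; auto.
    + intros v [<-|hv] hv'; [tauto | now apply Hn].
  - destruct (classic (exists v, In v C /\ ~ no_W_part v)) as [[v [hv hv']]|hno].
    + assert (v = u) by (apply Huniq; simpl; auto); subst v.
      destruct (Hn u hv hv') as [n [hn [e0 [e1 [e2 em]]]]].
      exists ((n + 1) * ga0 u), ((n + 1) * ga1 u), ((n + 1) * ga2 u), (gscale u).
      split; [apply Hmu; now left | split; [|split]];
        [intros y; simpl; rewrite Hs, e0, e1, e2, em; ring
        | intros Hno; exfalso; apply hu, Hno; now left |].
      intros w hw hw'; assert (w = u) by (apply Huniq; simpl; auto); subst w.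
      exists (n + 1); repeat split; lra.
    + assert (Hall : forall w, In w C -> no_W_part w)
        by (intros w hw; apply NNPP; intros hw'; apply hno; now exists w).
      destruct (Hz Hall) as [e0 [e1 e2]].
      exists (ga0 u), (ga1 u), (ga2 u), (gscale u).
      split; [apply Hmu; now left | split; [|split]];
        [intros y; simpl; rewrite Hs, e0, e1, e2; ring
        | intros Hno; exfalso; apply hu, Hno; now left |].
      intros w [<-|hw] hw'; [exists 1; repeat split; lra | exfalso; apply hw', Hall, hw].
Qed.

Lemma wsum_class W C :
  (forall u v, In u C -> In v C -> ~ no_W_part u -> ~ no_W_part v -> u = v) ->
  (forall u, In u C -> 0 < gscale u) ->
  exists a0 a1 a2 mu, 0 < mu /\ (forall y, wsum W C y = quad a0 a1 a2 y * W (mu * y)) /\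
    (a0 = 0 -> a1 = 0 -> a2 = 0 -> forall u, In u C -> no_W_part u).
Proof.
  intros Huniq Hmu.
  destruct (wsum_class_multiple W C Huniq Hmu) as [a0 [a1 [a2 [mu [hmu [Hs [_ Hn]]]]]]].
  exists a0, a1, a2, mu; split; [easy | split; [easy|]].
  intros -> -> -> u hu; apply NNPP; intros hu'.
  destruct (Hn u hu hu') as [n [hn [e0 [e1 [e2 _]]]]].
  apply hu'; repeat split; nra.
Qed.

Lemma wsum_no_W_part W C y : (forall u, In u C -> no_W_part u) -> wsum W C y = 0.
Proof.
  unfold wsum; induction C as [|u C IH]; intros H; simpl; [easy|].
  destruct (H u (or_introl eq_refl)) as [-> [-> ->]].
  rewrite IH by (intros; apply H; now right); unfold quad; ring.
Qed.

Lemma gsum_class_zero W ts C x : (forall u, In u C -> same_class u ts) ->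
  (forall u, In u C -> no_W_part u) ->
  coef_sum gq0 C = 0 -> coef_sum gq1 C = 0 -> coef_sum gq2 C = 0 -> gsum W C x = 0.
Proof.
  intros Hs Hz e0 e1 e2; replace x with (gcenter ts + (x - gcenter ts)) by ring.
  rewrite gsum_same_class, e0, e1, e2, wsum_no_W_part by easy; unfold quad; ring.
Qed.

Definition admissible (l : list gterm) :=
  (forall u, In u l -> 0 < grate u /\ 0 < gscale u) /\
  (forall u v, In u l -> In v l -> same_class u v -> ~ no_W_part u -> ~ no_W_part v -> u = v).

Lemma admissible_incl l l' : incl l' l -> admissible l -> admissible l'.
Proof. intros Hi [Hpos Huniq]; split; [intros; apply Hpos | intros; apply Huniq]; auto. Qed.

Section Vanishing.

Variable W : R -> R.
Hypothesis HW : mills_approx W.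

(* The terms outside the class of [ts] are [O(exp (- grate ts * y ^ 2) / y ^ 7)], so the
   profile of that class is [O(y ^ -7)], which by [W_combination_zero] kills it. *)
Lemma dominant_class_vanishes l ts : admissible l -> In ts l ->
  (forall u, In u l -> dominates ts u \/ same_class u ts) ->
  for_large (fun x => gsum W l x = 0) ->
  let C := filter (same_classb ts) l in
  (forall u, In u C -> no_W_part u) /\
  coef_sum gq0 C = 0 /\ coef_sum gq1 C = 0 /\ coef_sum gq2 C = 0.
Proof.
  intros [Hpos Huniq] hts Hdom H0 C.
  set (Rr := filter (fun u => negb (same_classb ts u)) l).
  assert (HC := fun u => proj1 (In_filter_same_classb ts l u)); fold C in HC.
  assert (HR := fun u => proj1 (In_filter_not_same_classb ts l u)); fold Rr in HR.
  destruct (wsum_class W C) as [a0 [a1 [a2 [mu [hmu [Hs Hz]]]]]].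
  { intros u v hu hv; apply HC in hu as [hu [hu1 hu2]], hv as [hv [hv1 hv2]].
    apply Huniq; auto; split; congruence. }
  { intros u hu; apply HC in hu as [hu _]; apply Hpos, hu. }
  assert (HRsmall := for_large_Rabs_gsum_le W (gcenter ts)
    (fun y => exp (- grate ts * y ^ 2) / y ^ 7) Rr).
  specialize (HRsmall ltac:(intros u hu; apply HR in hu as [hu hns];
    destruct (Hpos u hu); destruct (Hdom u hu); [now apply geval_dominated | tauto])).
  destruct (W_combination_zero W (coef_sum gq0 C) (coef_sum gq1 C) (coef_sum gq2 C)
              a0 a1 a2 mu (INR (length Rr)) HW hmu) as [e0 [e1 [e2 [f0 [f1 f2]]]]].
  - generalize (for_large_and _ _ (for_large_shift (gcenter ts) _ H0) HRsmall).
    apply for_large_imp; intros y [Hl HRy].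
    rewrite (gsum_filter W (same_classb ts)) in Hl; fold C Rr in Hl.
    rewrite gsum_same_class, Hs in Hl by (intros u hu; now apply HC).
    set (F := quad _ _ _ y + quad a0 a1 a2 y * W (mu * y)) in *.
    set (E := exp (- grate ts * y ^ 2)) in *.
    assert (hE : 0 < E) by apply exp_pos.
    replace (gsum W Rr (gcenter ts + y)) with (- (E * F)) in HRy by lra.
    rewrite Rabs_Ropp, Rabs_mult, (Rabs_right E) in HRy by lra.
    apply (Rmult_le_reg_l E); [easy|]; unfold Rdiv in *; lra.
  - split; [now apply Hz | auto].
Qed.

Lemma gsum_vanishing n l : (length l <= n)%nat -> admissible l ->
  for_large (fun x => gsum W l x = 0) ->
  (forall u, In u l -> no_W_part u) /\
  (forall u, In u l -> (forall v, In v l -> same_class u v -> v = u) ->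
     gq0 u = 0 /\ gq1 u = 0 /\ gq2 u = 0).
Proof.
  revert l; induction n as [|n IHn]; intros l hlen Hadm H0.
  { destruct l; [split; intros u [] | simpl in hlen; lia]. }
  destruct (classic (l = [])) as [->|hnil]; [split; intros u []|].
  destruct (exists_dominant l hnil) as [ts [hts Hdom]].
  destruct (dominant_class_vanishes l ts Hadm hts Hdom H0) as [Hz [e0 [e1 e2]]].
  set (C := filter (same_classb ts) l) in *.
  set (Rr := filter (fun u => negb (same_classb ts u)) l).
  assert (HC := In_filter_same_classb ts l); fold C in HC.
  assert (HR := In_filter_not_same_classb ts l); fold Rr in HR.
  assert (htsC : In ts C) by (apply HC; split; [|split]; auto).
  assert (hlenC : (1 <= length C)%nat) by (destruct C; [destruct htsC | simpl; lia]).
  destruct (IHn Rr) as [IH1 IH2].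
  - generalize (filter_length (same_classb ts) l); fold C Rr; lia.
  - apply (admissible_incl l); [intros u hu; now apply HR | easy].
  - revert H0; apply for_large_imp; intros x Hx.
    rewrite (gsum_filter W (same_classb ts)) in Hx; fold C Rr in Hx.
    rewrite (gsum_class_zero W ts C) in Hx by (try intros u hu; try apply HC; auto).
    lra.
  - split.
    + intros u hu; destruct (classic (same_class u ts)); [apply Hz, HC | apply IH1, HR]; auto.
    + intros u hu Hun; destruct (classic (same_class u ts)) as [hs|hs].
      * assert (HCu : forall v, In v C -> v = u).
        { intros v hv; apply HC in hv as [hv hv']; apply Hun; auto.
          destruct hs, hv'; split; congruence. }
        apply le_INR in hlenC; simpl in hlenC.
        rewrite !(coef_sum_const _ C u HCu) in *; repeat split; nra.
      * apply IH2; [now apply HR|].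
        intros v hv hs'; apply HR in hv as [hv _]; now apply Hun.
Qed.

End Vanishing.

(** * Negligible sets *)

Lemma sum_f_R0_update f g n0 N : (forall n, n <> n0 -> g n = f n) -> (n0 <= N)%nat ->
  sum_f_R0 g N = sum_f_R0 f N - f n0 + g n0.
Proof.
  intros Hfg; induction N as [|N IH]; intros hN; simpl.
  - replace n0 with 0%nat by lia; ring.
  - destruct (Nat.eq_dec n0 (S N)) as [->|hne].
    + rewrite (sum_eq g f) by (intros n hn; apply Hfg; lia); ring.
    + rewrite IH, (Hfg (S N)) by lia; ring.
Qed.

Lemma sum_len_nonneg (a b : nat -> R) N : (forall n, a n <= b n) ->
  0 <= sum_f_R0 (fun n => b n - a n) N.
Proof. intros hab; apply cond_pos_sum; intros n; generalize (hab n); lra. Qed.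

(* Removing the interval that contains [c] and moving the last interval into its slot,
   the remaining [N] intervals cover [b n0, d]. *)
Lemma interval_cover_length (a b : nat -> R) N c d : (forall n, a n <= b n) ->
  (forall x, c <= x <= d -> exists n, (n <= N)%nat /\ a n < x < b n) ->
  d - c <= sum_f_R0 (fun n => b n - a n) N.
Proof.
  revert a b c; induction N as [|N IH]; intros a b c hab Hcov.
  - destruct (Rle_dec c d) as [hcd|hcd]; [|generalize (sum_len_nonneg a b 0 hab); lra].
    destruct (Hcov c ltac:(lra)) as [i [hi hc]], (Hcov d ltac:(lra)) as [j [hj hd]].
    replace i with 0%nat in hc by lia; replace j with 0%nat in hd by lia; simpl; lra.
  - destruct (Rle_dec c d) as [hcd|hcd]; [|generalize (sum_len_nonneg a b (S N) hab); lra].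
    destruct (Hcov c ltac:(lra)) as [n0 [hn0 hc]].
    set (a' n := if Nat.eq_dec n n0 then a (S N) else a n).
    set (b' n := if Nat.eq_dec n n0 then b (S N) else b n).
    assert (Hrest := IH a' b' (b n0)).
    assert (Hsum : sum_f_R0 (fun n => b' n - a' n) N + (b n0 - a n0) =
                   sum_f_R0 (fun n => b n - a n) N + (b (S N) - a (S N))).
    { destruct (Compare_dec.le_lt_dec n0 N) as [hle|hlt].
      - rewrite (sum_f_R0_update (fun n => b n - a n) _ n0 N); [|intros n hn|easy];
          unfold a', b'; destruct (Nat.eq_dec n0 n0); try destruct (Nat.eq_dec n n0); try lia; ring.
      - replace n0 with (S N) by lia.
        rewrite (sum_eq _ (fun n => b n - a n)); [ring|].
        intros n hn; unfold a', b'; destruct (Nat.eq_dec n n0); [lia | easy]. }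
    assert (d - b n0 <= sum_f_R0 (fun n => b' n - a' n) N); [|simpl; lra].
    apply Hrest; [intros n; unfold a', b'; destruct (Nat.eq_dec n n0); apply hab|].
    intros x hx; destruct (Hcov x ltac:(lra)) as [n [hn hxn]].
    destruct (Nat.eq_dec n n0) as [->|hne]; [lra|].
    destruct (Nat.eq_dec n (S N)) as [->|hne'].
    + exists n0; unfold a', b'; destruct (Nat.eq_dec n0 n0); [|easy].
      split; [|easy]. destruct (Nat.eq_dec n0 (S N)); [congruence | lia].
    + exists n; unfold a', b'; destruct (Nat.eq_dec n n0); [easy|]; split; [lia|easy].
Qed.

Lemma nat_bound_of_list (lr : list R) : exists N, forall n, In (INR n) lr -> (n <= N)%nat.
Proof.
  induction lr as [|r lr [N HN]]; [now exists 0%nat|].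
  destruct (classic (exists n, r = INR n)) as [[k ->]|hno].
  - exists (max N k); intros n [h|h]; [apply INR_eq in h; lia | specialize (HN n h); lia].
  - exists N; intros n [h|h]; [exfalso; apply hno; now exists n | auto].
Qed.

(* Heine-Borel, with the interval index [n] encoded as the real [INR n]. *)
Lemma interval_cover_finite c d (a b : nat -> R) : (forall n, a n <= b n) ->
  (forall x, c <= x <= d -> exists n, a n < x < b n) ->
  exists N, d - c <= sum_f_R0 (fun n => b n - a n) N.
Proof.
  intros hab Hcov.
  set (fam := fun r y => exists n, r = INR n /\ a n < y < b n).
  assert (cf : forall r, (exists y, fam r y) -> (fun r => exists n : nat, r = INR n) r)
    by (intros r [y [n [h _]]]; now exists n).
  set (F := mkfamily (fun r => exists n : nat, r = INR n) fam cf).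
  destruct (Rle_dec c d) as [hcd|hcd];
    [|exists 0%nat; generalize (sum_len_nonneg a b 0 hab); lra].
  assert (Hop : covering_open_set (fun x => c <= x <= d) F).
  { split.
    - intros x hx; destruct (Hcov x hx) as [n hn]; exists (INR n); now exists n.
    - intros r y [n [hr hy]].
      assert (hpos : 0 < Rmin (y - a n) (b n - y)) by (apply Rmin_pos; lra).
      exists (mkposreal _ hpos); intros z hz; unfold disc in hz; simpl in hz.
      exists n; split; [easy|].
      generalize (Rmin_l (y - a n) (b n - y)) (Rmin_r (y - a n) (b n - y)).
      apply Rabs_def2 in hz; lra. }
  destruct (compact_P3 c d F Hop) as [D [Hcv [lr Hlr]]].
  destruct (nat_bound_of_list lr) as [N HN].
  exists N; apply interval_cover_length; [easy|].
  intros x hx; destruct (Hcv x hx) as [r [[n [hr hxn]] hD]].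
  exists n; split; [|easy]. apply HN; rewrite <- hr; apply Hlr; split; [now exists n | easy].
Qed.

Lemma negligible_empty (S : R -> Prop) : (forall x, ~ S x) -> negligible S.
Proof.
  intros H eps he; exists (fun _ => 0), (fun _ => 0); split; [intros; lra | split].
  - intros x hx; now destruct (H x hx).
  - intros N; rewrite (sum_eq _ (fun _ => 0 * 0)), sum_cte by (intros; ring); lra.
Qed.

Lemma negligible_incl (S1 S2 : R -> Prop) :
  (forall x, S2 x -> S1 x) -> negligible S1 -> negligible S2.
Proof.
  intros Hs H eps he; destruct (H eps he) as [a [b [h1 [h2 h3]]]]; exists a, b; auto.
Qed.

Lemma continuous_eq0_of_negligible (g : R -> R) : (forall x, continuity_pt g x) ->
  negligible (fun x => g x <> 0) -> forall x, g x = 0.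
Proof.
  intros Hc Hn x0; apply NNPP; intros h0.
  assert (hp : 0 < Rabs (g x0)) by now apply Rabs_pos_lt.
  destruct (Hc x0 (Rabs (g x0)) hp) as [alp [halp Halp]].
  destruct (Hn (alp / 2) ltac:(lra)) as [a [b [hab [Hcov Hsum]]]].
  destruct (interval_cover_finite (x0 - alp / 2) (x0 + alp / 2) a b hab) as [N HN].
  - intros x hx; apply Hcov; intros hx0.
    destruct (Req_dec x x0) as [->|hne]; [easy|].
    assert (hxa : Rabs (x - x0) < alp) by (apply Rabs_def1; lra).
    specialize (Halp x (conj (conj I (not_eq_sym hne)) hxa)).
    simpl in Halp; unfold R_dist in Halp; rewrite hx0, Rminus_0_l, Rabs_Ropp in Halp; lra.
  - specialize (Hsum N); lra.
Qed.

(** * The skew-normal kernel *)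

Definition skn_dtheta x t v m := 2 / v *
  ((x - t) / sqrt v * phi ((x - t) / sqrt v) * Phi (m * (x - t) / sqrt v)
   - m * phi ((x - t) / sqrt v) * phi (m * (x - t) / sqrt v)).

Definition skn_dv x t v m := / (v * sqrt v) *
  ((((x - t) / sqrt v) ^ 2 - 1) * phi ((x - t) / sqrt v) * Phi (m * (x - t) / sqrt v)
   - m * ((x - t) / sqrt v) * phi ((x - t) / sqrt v) * phi (m * (x - t) / sqrt v)).

Definition skn_dm x t v m :=
  2 / sqrt v * ((x - t) / sqrt v) * phi ((x - t) / sqrt v) * phi (m * (x - t) / sqrt v).

Lemma derivable_pt_lim_skn_theta x t v m : 0 < v ->
  derivable_pt_lim (fun t => skn x t v m) t (skn_dtheta x t v m).
Proof.
  intros hv; apply is_derive_Reals; assert (hs : 0 < sqrt v) by now apply sqrt_lt_R0.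
  unfold skn; auto_derive.
  - repeat split; auto using ex_derive_Phi, ex_derive_phi; lra.
  - rewrite Derive_Phi, Derive_phi; unfold skn_dtheta.
    set (s := sqrt v) in *; replace v with (s * s) by (apply sqrt_sqrt; lra).
    unfold Rdiv, Rminus; field; lra.
Qed.

Lemma derivable_pt_lim_skn_v x t v m : 0 < v ->
  derivable_pt_lim (fun v => skn x t v m) v (skn_dv x t v m).
Proof.
  intros hv; apply is_derive_Reals; assert (hs : 0 < sqrt v) by now apply sqrt_lt_R0.
  unfold skn; auto_derive.
  - repeat split; auto using ex_derive_Phi, ex_derive_phi; lra.
  - rewrite Derive_Phi, Derive_phi; unfold skn_dv.
    set (s := sqrt v) in *; replace v with (s * s) by (apply sqrt_sqrt; lra).
    unfold Rdiv, Rminus; field; lra.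
Qed.

Lemma derivable_pt_lim_skn_m x t v m : 0 < v ->
  derivable_pt_lim (fun m => skn x t v m) m (skn_dm x t v m).
Proof.
  intros hv; apply is_derive_Reals; assert (hs : 0 < sqrt v) by now apply sqrt_lt_R0.
  unfold skn; auto_derive.
  - repeat split; auto using ex_derive_Phi; lra.
  - rewrite Derive_Phi; unfold skn_dm, Rdiv, Rminus; field; lra.
Qed.

Definition sqrt2PI := sqrt (2 * PI).

Definition skew_const m lam := if Rlt_dec 0 m then 1 - lam else lam.
Definition skew_sign m := if Rlt_dec 0 m then -1 else 1.

Lemma Phi_skew_split lam W m z : m <> 0 -> (forall u, Phi (- u) = lam + phi u * W u) ->
  Phi (m * z) = skew_const m lam + skew_sign m * phi (m * z) * W (Rabs m * z).
Proof.
  intros hm HW; unfold skew_const, skew_sign; destruct (Rlt_dec 0 m) as [h|h].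
  - rewrite Rabs_right by lra.
    replace (Phi (m * z)) with (1 - Phi (- (m * z))) by (rewrite Phi_opp; ring).
    rewrite HW; ring.
  - rewrite Rabs_left by lra.
    replace (m * z) with (- (- m * z)) by ring; rewrite HW, phi_opp; ring.
Qed.

Lemma phi_std x t v : 0 < v -> phi ((x - t) / sqrt v) = exp (- / (2 * v) * (x - t) ^ 2) / sqrt2PI.
Proof.
  intros hv; unfold phi, gauss, sqrt2PI; do 2 f_equal.
  assert (hs : 0 < sqrt v) by now apply sqrt_lt_R0.
  set (s := sqrt v) in *; replace v with (s * s) by (apply sqrt_sqrt; lra); field; lra.
Qed.

Lemma phi_skew x t v m : 0 < v ->
  phi (m * (x - t) / sqrt v) = exp (- (m ^ 2 / (2 * v)) * (x - t) ^ 2) / sqrt2PI.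
Proof.
  intros hv; unfold phi, gauss, sqrt2PI; do 2 f_equal.
  assert (hs : 0 < sqrt v) by now apply sqrt_lt_R0.
  set (s := sqrt v) in *; replace v with (s * s) by (apply sqrt_sqrt; lra); field; lra.
Qed.

(* With [Phi (m z) = skew_const + skew_sign * phi (m z) * W (|m| z)], every combination of
   [f, df/dtheta, df/dv, df/dm] at [(theta, v, m)] is a Gaussian term of rate [1 / (2 v)]
   without W-part plus one of rate [(1 + m ^ 2) / (2 v)] whose W-part has scale [|m| / sigma]. *)
Definition gauss_part th v m lam (a b c d : R) :=
  let s := sqrt v in let k := skew_const m lam / sqrt2PI in
  GTerm (/ (2 * v)) th (k * (2 * a / s - c / (v * s))) (k * (2 * b / (v * s)))
    (k * (c / (v * v * s))) 0 0 0 1.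

Definition skew_part th v m (a b c d : R) :=
  let s := sqrt v in let k := skew_sign m / (sqrt2PI * sqrt2PI) in
  GTerm ((1 + m ^ 2) / (2 * v)) th (- 2 * b * m / v / (sqrt2PI * sqrt2PI))
    ((- c * m / (v * s) + 2 * d / s) / s / (sqrt2PI * sqrt2PI)) 0
    (k * (2 * a / s - c / (v * s))) (k * (2 * b / (v * s))) (k * (c / (v * v * s)))
    (Rabs m / s).

Lemma skn_combination_split x th v m lam W a b c d : 0 < v -> m <> 0 ->
  (forall u, Phi (- u) = lam + phi u * W u) ->
  a * skn x th v m + b * skn_dtheta x th v m + c * skn_dv x th v m + d * skn_dm x th v m =
  geval W (gauss_part th v m lam a b c d) x + geval W (skew_part th v m a b c d) x.
Proof.
  intros hv hm HW.
  assert (hs : 0 < sqrt v) by now apply sqrt_lt_R0.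
  assert (hsp : 0 < sqrt2PI) by apply sqrt_2PI_pos.
  unfold skn, skn_dtheta, skn_dv, skn_dm.
  replace (m * (x - th) / sqrt v) with (m * ((x - th) / sqrt v)) by (unfold Rdiv; ring).
  rewrite (Phi_skew_split lam W m _ hm HW).
  replace (m * ((x - th) / sqrt v)) with (m * (x - th) / sqrt v) by (unfold Rdiv; ring).
  replace (Rabs m * ((x - th) / sqrt v)) with (Rabs m / sqrt v * (x - th)) by (unfold Rdiv; ring).
  unfold geval, profile, quad, gauss_part, skew_part.
  cbn [grate gcenter gq0 gq1 gq2 ga0 ga1 ga2 gscale].
  rewrite phi_std, phi_skew by easy.
  replace (- ((1 + m ^ 2) / (2 * v)) * (x - th) ^ 2) with
    (- / (2 * v) * (x - th) ^ 2 + - (m ^ 2 / (2 * v)) * (x - th) ^ 2) by (field; lra).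
  rewrite exp_plus.
  set (s := sqrt v) in *; replace v with (s * s) by (apply sqrt_sqrt; lra).
  field; lra.
Qed.

Lemma skn_dm_m0 x th v : 0 < v ->
  skn_dm x th v 0 = 2 * v / (sqrt v * sqrt2PI) * skn_dtheta x th v 0.
Proof.
  intros hv; assert (hs : 0 < sqrt v) by now apply sqrt_lt_R0.
  assert (hsp := sqrt_2PI_pos).
  assert (phi0 : phi 0 = / sqrt2PI) by (unfold phi, gauss, sqrt2PI; rewrite Rmult_0_r, Ropp_0;
    unfold Rdiv; rewrite Rmult_0_l, exp_0; ring).
  assert (Phi0 : Phi 0 = / 2) by (generalize (Phi_opp 0); rewrite Ropp_0; lra).
  unfold skn_dm, skn_dtheta; rewrite !Rmult_0_l, !Rdiv_0_l, Phi0, phi0.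
  set (s := sqrt v) in *; replace v with (s * s) by (apply sqrt_sqrt; lra).
  unfold sqrt2PI in *; field; lra.
Qed.

Lemma skn_dm_gauss x th v m : 0 < v ->
  skn_dm x th v m =
  2 * (x - th) / v * exp (- ((1 + m ^ 2) / (2 * v)) * (x - th) ^ 2) / (sqrt2PI * sqrt2PI).
Proof.
  intros hv; assert (hs : 0 < sqrt v) by now apply sqrt_lt_R0.
  assert (hsp : 0 < sqrt2PI) by apply sqrt_2PI_pos.
  unfold skn_dm; rewrite phi_std, phi_skew by easy.
  replace (- ((1 + m ^ 2) / (2 * v)) * (x - th) ^ 2) with
    (- / (2 * v) * (x - th) ^ 2 + - (m ^ 2 / (2 * v)) * (x - th) ^ 2) by (field; lra).
  rewrite exp_plus.
  set (s := sqrt v) in *; replace v with (s * s) by (apply sqrt_sqrt; lra); field; lra.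
Qed.

Lemma skew_part_no_W_part th vv mm a b c d : 0 < vv -> mm <> 0 ->
  no_W_part (skew_part th vv mm a b c d) -> a = 0 /\ b = 0 /\ c = 0.
Proof.
  intros hvv hmm [z0 [z1 z2]]; cbn in z0, z1, z2.
  assert (hs : 0 < sqrt vv) by now apply sqrt_lt_R0.
  assert (hsp : 0 < sqrt2PI) by apply sqrt_2PI_pos.
  assert (hk : skew_sign mm / (sqrt2PI * sqrt2PI) <> 0).
  { unfold skew_sign; destruct (Rlt_dec 0 mm); apply Rmult_integral_contrapositive;
      split; try lra; apply Rinv_neq_0_compat; nra. }
  apply Rmult_integral in z0 as [|z0], z1 as [|z1], z2 as [|z2]; try easy.
  assert (c = 0) by (apply Rmult_integral in z2 as [|z2]; [easy|];
    apply Rinv_neq_0_compat in z2; [easy | apply Rmult_integral_contrapositive; split; nra]).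
  assert (b = 0) by (apply Rmult_integral in z1 as [|z1]; [lra|];
    apply Rinv_neq_0_compat in z1; [easy | nra]).
  subst c; repeat split; auto.
  unfold Rdiv in z0; rewrite Rmult_0_l, Rminus_0_r in z0.
  apply Rmult_integral in z0 as [|z0]; [lra|]; apply Rinv_neq_0_compat in z0; [easy | lra].
Qed.

Lemma skew_part_q1_eq0 th vv mm d : 0 < vv -> gq1 (skew_part th vv mm 0 0 0 d) = 0 -> d = 0.
Proof.
  intros hvv hq; cbn in hq.
  assert (hs : 0 < sqrt vv) by now apply sqrt_lt_R0.
  assert (hsp : 0 < sqrt2PI) by apply sqrt_2PI_pos.
  replace ((- 0 * mm / (vv * sqrt vv) + 2 * d / sqrt vv) / sqrt vv / (sqrt2PI * sqrt2PI))
    with (d * (2 / (sqrt vv * sqrt vv * (sqrt2PI * sqrt2PI)))) in hq by (field; lra).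
  apply Rmult_integral in hq as [|hq]; [easy|].
  apply Rmult_integral in hq as [|hq]; [lra|].
  apply Rinv_neq_0_compat in hq; [easy|]; apply Rgt_not_eq; repeat apply Rmult_lt_0_compat; lra.
Qed.

Lemma geval_gauss_part_abc0 W th vv mm lam d x : geval W (gauss_part th vv mm lam 0 0 0 d) x = 0.
Proof. unfold geval, profile, quad, gauss_part; cbn; unfold Rdiv; ring. Qed.

Lemma Rprod_upto_eq0 n f : Rprod_upto n f = 0 <-> exists j, (j < n)%nat /\ f j = 0.
Proof.
  induction n as [|n IH]; simpl.
  - split; [lra | intros [j [h _]]; lia].
  - split.
    + intros h; apply Rmult_integral in h as [h|h].
      * apply IH in h as [j [hj hf]]; exists j; split; [lia | easy].
      * exists n; split; [lia | easy].
    + intros [j [hj hf]]; destruct (Nat.eq_dec j n) as [->|hne]; [rewrite hf; ring|].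
      rewrite (proj2 IH) by (exists j; split; [lia | easy]); ring.
Qed.

Lemma Rsum_upto_ext n f g : (forall j, (j < n)%nat -> f j = g j) -> Rsum_upto n f = Rsum_upto n g.
Proof.
  induction n as [|n IH]; intros H; simpl; [easy|].
  rewrite IH, (H n) by (try intros; try apply H; lia); easy.
Qed.

Lemma Rsum_upto_zero n : Rsum_upto n (fun _ => 0) = 0.
Proof. induction n as [|n IH]; simpl; [|rewrite IH]; ring. Qed.

Lemma Rsum_upto_plus n f g :
  Rsum_upto n (fun j => f j + g j) = Rsum_upto n f + Rsum_upto n g.
Proof. induction n as [|n IH]; simpl; [|rewrite IH]; ring. Qed.

Lemma Rsum_upto_single n i X : (i < n)%nat ->
  Rsum_upto n (fun k => if Nat.eq_dec k i then X else 0) = X.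
Proof.
  induction n as [|n IH]; intros hi; [lia|]; simpl.
  destruct (Nat.eq_dec n i) as [->|hne].
  - rewrite (Rsum_upto_ext _ _ (fun _ => 0)).
    + destruct (Nat.eq_dec i i); [|easy]; rewrite Rsum_upto_zero; ring.
    + intros j hj; destruct (Nat.eq_dec j i); [lia | easy].
  - rewrite IH by lia; ring.
Qed.

Lemma continuity_pt_Rsum_upto n (F : nat -> R -> R) x :
  (forall j, (j < n)%nat -> continuity_pt (F j) x) ->
  continuity_pt (fun x => Rsum_upto n (fun j => F j x)) x.
Proof.
  induction n as [|n IH]; intros H; simpl.
  - apply continuity_pt_const; intros ? ?; easy.
  - apply (continuity_pt_plus (fun x => Rsum_upto n (fun j => F j x)) (F n));
      [apply IH; intros; apply H | apply H]; lia.
Qed.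

Lemma gsum_flat_map_seq W (F : nat -> list gterm) n x :
  gsum W (flat_map F (seq 0 n)) x = Rsum_upto n (fun j => gsum W (F j) x).
Proof.
  induction n as [|n IH]; [easy|].
  rewrite seq_S, flat_map_app; simpl Rsum_upto; rewrite <- IH.
  unfold gsum; rewrite fold_right_app; simpl flat_map; rewrite app_nil_r.
  generalize (flat_map F (seq 0 n)); intros l; induction l as [|u l IHl]; simpl; [ring|].
  rewrite IHl; ring.
Qed.

Lemma in_flat_map_seq {A} (F : nat -> list A) n u :
  In u (flat_map F (seq 0 n)) -> exists j, (j < n)%nat /\ In u (F j).
Proof.
  rewrite in_flat_map; intros [j [hj hu]]; apply in_seq in hj; exists j; split; [lia | easy].
Qed.

Definition same_skew_class (theta v m : nat -> R) i j :=
  theta i = theta j /\ v i * (1 + m j ^ 2) = v j * (1 + m i ^ 2).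

Section SkewNormalFamily.

Variables (k0 : nat) (theta v m : nat -> R).
Hypothesis hv : forall j, (j < k0)%nat -> 0 < v j.

Definition skn_comb (a b c d : nat -> R) x := Rsum_upto k0 (fun j =>
  a j * skn x (theta j) (v j) (m j) + b j * skn_dtheta x (theta j) (v j) (m j)
  + c j * skn_dv x (theta j) (v j) (m j) + d j * skn_dm x (theta j) (v j) (m j)).

Definition nontrivial (a b c d : nat -> R) :=
  exists j, (j < k0)%nat /\ (a j <> 0 \/ b j <> 0 \/ c j <> 0 \/ d j <> 0).

Lemma continuous_skn_comb a b c d x : continuity_pt (skn_comb a b c d) x.
Proof.
  apply (continuity_pt_Rsum_upto k0 (fun j x => _)); intros j hj.
  assert (hs : 0 < sqrt (v j)) by now apply sqrt_lt_R0, hv.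
  apply derivable_continuous_pt, ex_derive_Reals_0.
  unfold skn, skn_dtheta, skn_dv, skn_dm, phi, gauss; auto_derive.
  repeat split; auto using ex_derive_Phi; apply Rgt_not_eq;
    repeat apply Rmult_lt_0_compat; lra.
Qed.

Lemma skn_comb_eq_of_derivatives (dth dv dm : nat -> R -> R) :
  (forall j x, (j < k0)%nat ->
     derivable_pt_lim (fun t => skn x t (v j) (m j)) (theta j) (dth j x)) ->
  (forall j x, (j < k0)%nat ->
     derivable_pt_lim (fun t => skn x (theta j) t (m j)) (v j) (dv j x)) ->
  (forall j x, (j < k0)%nat ->
     derivable_pt_lim (fun t => skn x (theta j) (v j) t) (m j) (dm j x)) ->
  forall a b c d x, Rsum_upto k0 (fun j => a j * skn x (theta j) (v j) (m j)
    + b j * dth j x + c j * dv j x + d j * dm j x) = skn_comb a b c d x.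
Proof.
  intros hdth hdv hdm a b c d x; apply Rsum_upto_ext; intros j hj.
  rewrite (uniqueness_limite _ _ _ _ (hdth j x hj) (derivable_pt_lim_skn_theta _ _ _ _ (hv j hj))),
    (uniqueness_limite _ _ _ _ (hdv j x hj) (derivable_pt_lim_skn_v _ _ _ _ (hv j hj))),
    (uniqueness_limite _ _ _ _ (hdm j x hj) (derivable_pt_lim_skn_m _ _ _ _ (hv j hj))).
  reflexivity.
Qed.

Lemma skn_dependent_of_m_zero j : (j < k0)%nat -> m j = 0 ->
  exists a b c d, nontrivial a b c d /\ forall x, skn_comb a b c d x = 0.
Proof.
  intros hj hmj.
  exists (fun _ => 0), (fun k => if Nat.eq_dec k j then - 2 * v j / (sqrt (v j) * sqrt2PI) else 0),
    (fun _ => 0), (fun k => if Nat.eq_dec k j then 1 else 0).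
  split; [exists j; split; [easy | right; right; right]; cbv beta;
    destruct (Nat.eq_dec j j); [lra | congruence]|].
  intros x; unfold skn_comb.
  transitivity (Rsum_upto k0 (fun _ => 0)); [|apply Rsum_upto_zero].
  apply Rsum_upto_ext; intros k hk.
  cbv beta; destruct (Nat.eq_dec k j) as [->|]; [|ring].
  rewrite hmj, skn_dm_m0 by (now apply hv); unfold Rdiv; ring.
Qed.

Lemma skn_dependent_of_same_skew_class i j : (i < k0)%nat -> (j < k0)%nat -> i <> j ->
  same_skew_class theta v m i j ->
  exists a b c d, nontrivial a b c d /\ forall x, skn_comb a b c d x = 0.
Proof.
  intros hi hj hij [hth hrate]; assert (hvi := hv i hi); assert (hvj := hv j hj).
  exists (fun _ => 0), (fun _ => 0), (fun _ => 0),
    (fun k => if Nat.eq_dec k i then v i else if Nat.eq_dec k j then - v j else 0).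
  split; [exists i; split; [easy | right; right; right]; cbv beta;
    destruct (Nat.eq_dec i i); [lra | congruence]|].
  intros x; unfold skn_comb.
  transitivity (Rsum_upto k0 (fun k =>
    (if Nat.eq_dec k i then v i * skn_dm x (theta i) (v i) (m i) else 0)
    + (if Nat.eq_dec k j then - v j * skn_dm x (theta j) (v j) (m j) else 0))).
  - apply Rsum_upto_ext; intros k hk; cbv beta.
    destruct (Nat.eq_dec k i) as [->|];
      [destruct (Nat.eq_dec i j); [lia | ring] | destruct (Nat.eq_dec k j) as [->|]; ring].
  - assert (hr : (1 + m i ^ 2) / (2 * v i) = (1 + m j ^ 2) / (2 * v j))
      by (apply (Rmult_eq_reg_r (2 * v i * (2 * v j))); [field_simplify; nra | nra]).
    rewrite Rsum_upto_plus, !Rsum_upto_single, !skn_dm_gauss, hth, hr by easy.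
    field; generalize sqrt_2PI_pos; unfold sqrt2PI; lra.
Qed.

Lemma skn_comb_dependent :
  (exists j, (j < k0)%nat /\ m j = 0) \/
  (exists i j, (i < k0)%nat /\ (j < k0)%nat /\ i <> j /\ same_skew_class theta v m i j) ->
  exists a b c d, nontrivial a b c d /\ forall x, skn_comb a b c d x = 0.
Proof.
  intros [[j [hj hmj]] | [i [j [hi [hj [hij hij']]]]]];
    [apply (skn_dependent_of_m_zero j) | apply (skn_dependent_of_same_skew_class i j)]; auto.
Qed.

Hypothesis hm : ~ exists j, (j < k0)%nat /\ m j = 0.
Hypothesis hcls :
  ~ exists i j, (i < k0)%nat /\ (j < k0)%nat /\ i <> j /\ same_skew_class theta v m i j.

Lemma m_nonzero j : (j < k0)%nat -> m j <> 0.
Proof. intros hj hmj; apply hm; now exists j. Qed.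

Lemma skew_part_class_inj i j a1 b1 c1 d1 a2 b2 c2 d2 : (i < k0)%nat -> (j < k0)%nat ->
  same_class (skew_part (theta i) (v i) (m i) a1 b1 c1 d1)
             (skew_part (theta j) (v j) (m j) a2 b2 c2 d2) ->
  i = j.
Proof.
  intros hi hj [hr hth]; cbn in hr, hth.
  destruct (Nat.eq_dec i j) as [|hij]; [easy|exfalso].
  apply hcls; exists i, j; do 4 (split; [easy|]).
  assert (hvi := hv i hi); assert (hvj := hv j hj).
  apply (Rmult_eq_compat_r (2 * v i * (2 * v j))) in hr.
  field_simplify in hr; lra.
Qed.

Section WithMills.

Variables (lam : R) (W : R -> R).
Hypothesis HW : mills_approx W.
Hypothesis HPhi : forall u, Phi (- u) = lam + phi u * W u.

Lemma parts_pos j a b c d : (j < k0)%nat ->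
  (0 < grate (gauss_part (theta j) (v j) (m j) lam a b c d) /\
   0 < gscale (gauss_part (theta j) (v j) (m j) lam a b c d)) /\
  (0 < grate (skew_part (theta j) (v j) (m j) a b c d) /\
   0 < gscale (skew_part (theta j) (v j) (m j) a b c d)).
Proof.
  intros hj; assert (hvj := hv j hj).
  assert (hs : 0 < sqrt (v j)) by now apply sqrt_lt_R0.
  cbn; repeat split; [apply Rinv_0_lt_compat; lra | lra | |].
  - apply Rdiv_lt_0_compat; [generalize (pow2_ge_0 (m j)) | ]; lra.
  - apply Rdiv_lt_0_compat; [now apply Rabs_pos_lt, m_nonzero | easy].
Qed.

Definition parts a b c d := flat_map (fun j =>
  [gauss_part (theta j) (v j) (m j) lam (a j) (b j) (c j) (d j);
   skew_part (theta j) (v j) (m j) (a j) (b j) (c j) (d j)]) (seq 0 k0).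

Lemma gsum_parts a b c d x : gsum W (parts a b c d) x = skn_comb a b c d x.
Proof.
  unfold parts; rewrite gsum_flat_map_seq; apply Rsum_upto_ext; intros j hj.
  rewrite skn_combination_split with (lam := lam) (W := W) by auto using m_nonzero.
  unfold gsum; simpl; ring.
Qed.

Lemma admissible_parts a b c d : admissible (parts a b c d).
Proof.
  split.
  - intros u hu; apply in_flat_map_seq in hu as [j [hj [<-|[<-|[]]]]]; now apply parts_pos.
  - intros u w hu hw hs hu' hw'.
    apply in_flat_map_seq in hu as [i [hi [<-|[<-|[]]]]];
      [exfalso; apply hu'; repeat split | ].
    apply in_flat_map_seq in hw as [j [hj [<-|[<-|[]]]]];
      [exfalso; apply hw'; repeat split | ].
    now rewrite <- (skew_part_class_inj i j _ _ _ _ _ _ _ _ hi hj hs).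
Qed.

Lemma skn_comb_zero_abc a b c d : (forall x, skn_comb a b c d x = 0) ->
  forall j, (j < k0)%nat -> a j = 0 /\ b j = 0 /\ c j = 0.
Proof.
  intros H0 j hj.
  destruct (gsum_vanishing W HW _ (parts a b c d) (le_n _) (admissible_parts a b c d)) as [Hz _].
  { exists 0; intros x _; now rewrite gsum_parts. }
  apply (skew_part_no_W_part (theta j) (v j) (m j) _ _ _ (d j)); auto using m_nonzero.
  apply Hz, in_flat_map; exists j; split; [apply in_seq; lia | now right; left].
Qed.

Definition skew_parts d :=
  flat_map (fun j => [skew_part (theta j) (v j) (m j) 0 0 0 (d j)]) (seq 0 k0).

Lemma skn_comb_zero_d d : (forall x, skn_comb (fun _ => 0) (fun _ => 0) (fun _ => 0) d x = 0) ->
  forall j, (j < k0)%nat -> d j = 0.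
Proof.
  intros H0 j hj.
  destruct (gsum_vanishing W HW _ (skew_parts d) (le_n _)) as [_ Hq].
  - split.
    + intros u hu; apply in_flat_map_seq in hu as [i [hi [<-|[]]]]; now apply parts_pos.
    + intros u w hu hw _ hu'; exfalso; apply hu'.
      apply in_flat_map_seq in hu as [i [hi [<-|[]]]].
      unfold no_W_part; cbn; unfold Rdiv; repeat split; ring.
  - exists 0; intros x _; rewrite <- (H0 x); unfold skew_parts.
    rewrite gsum_flat_map_seq; apply Rsum_upto_ext; intros i hi.
    cbv beta; rewrite skn_combination_split with (lam := lam) (W := W) by auto using m_nonzero.
    rewrite geval_gauss_part_abc0; unfold gsum; simpl; ring.
  - apply (skew_part_q1_eq0 (theta j) (v j) (m j)); [now apply hv|].
    apply Hq; [apply in_flat_map; exists j; split; [apply in_seq; lia | now left]|].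
    intros w hw hs; apply in_flat_map_seq in hw as [i [hi [<-|[]]]].
    now rewrite (skew_part_class_inj j i _ _ _ _ _ _ _ _ hj hi hs).
Qed.

End WithMills.

Lemma skn_comb_independent a b c d :
  (forall x, skn_comb a b c d x = 0) ->
  forall j, (j < k0)%nat -> a j = 0 /\ b j = 0 /\ c j = 0 /\ d j = 0.
Proof.
  intros H0 j hj; destruct exists_mills_W as [lam [W [HW HPhi]]].
  assert (Habc := skn_comb_zero_abc lam W HW HPhi a b c d H0).
  destruct (Habc j hj) as [ea [eb ec]]; repeat split; auto.
  apply (skn_comb_zero_d lam W HW HPhi d); [|easy].
  intros x; transitivity (skn_comb a b c d x); [|apply H0].
  apply Rsum_upto_ext; intros i hi.
  destruct (Habc i hi) as [-> [-> ->]]; reflexivity.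
Qed.

End SkewNormalFamily.

Lemma P1_eq0_iff k0 m : P1 k0 m = 0 <-> exists j, (j < k0)%nat /\ m j = 0.
Proof. apply Rprod_upto_eq0. Qed.

Lemma P2_eq0_iff k0 theta v m : P2 k0 theta v m = 0 <->
  exists i j, (i < k0)%nat /\ (j < k0)%nat /\ i <> j /\ same_skew_class theta v m i j.
Proof.
  unfold P2; rewrite Rprod_upto_eq0; split.
  - intros [i [hi Hi]]; apply Rprod_upto_eq0 in Hi as [j [hj Hij]].
    destruct (Nat.eqb_spec i j) as [->|hne]; [lra|].
    assert (g1 := pow2_ge_0 (theta i - theta j)).
    assert (g2 := pow2_ge_0 (v i * (1 + m j ^ 2) - v j * (1 + m i ^ 2))).
    exists i, j; repeat split; auto; nra.
  - intros [i [j [hi [hj [hij [h1 h2]]]]]]; exists i; split; [easy|].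
    apply Rprod_upto_eq0; exists j; split; [easy|].
    destruct (Nat.eqb_spec i j); [lia|]; rewrite h1, h2; ring.
Qed.

Theorem lemma4p1 (k0 : nat) (theta v m : nat -> R)
  (hv : forall j, (j < k0)%nat -> 0 < v j)
  (hdist : forall i j, (i < k0)%nat -> (j < k0)%nat -> i <> j ->
     (theta i, v i, m i) <> (theta j, v j, m j))
  (dth dv dm : nat -> R -> R)
  (hdth : forall j x, (j < k0)%nat ->
     derivable_pt_lim (fun t => skn x t (v j) (m j)) (theta j) (dth j x))
  (hdv : forall j x, (j < k0)%nat ->
     derivable_pt_lim (fun t => skn x (theta j) t (m j)) (v j) (dv j x))
  (hdm : forall j x, (j < k0)%nat ->
     derivable_pt_lim (fun t => skn x (theta j) (v j) t) (m j) (dm j x)) :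
  (exists a b c d : nat -> R,
     (exists j, (j < k0)%nat /\ (a j <> 0 \/ b j <> 0 \/ c j <> 0 \/ d j <> 0)) /\
     negligible (fun x =>
       Rsum_upto k0 (fun j => a j * skn x (theta j) (v j) (m j)
                              + b j * dth j x + c j * dv j x + d j * dm j x) <> 0))
  <-> (P1 k0 m = 0 \/ P2 k0 theta v m = 0).
Proof.
  assert (Hcomb := skn_comb_eq_of_derivatives k0 theta v m hv dth dv dm hdth hdv hdm).
  rewrite P1_eq0_iff, P2_eq0_iff; split.
  - intros [a [b [c [d [[j [hj hnz]] Hneg]]]]]; apply NNPP; intros HP.
    assert (H0 : forall x, skn_comb k0 theta v m a b c d x = 0).
    { apply continuous_eq0_of_negligible; [now apply continuous_skn_comb|].
      revert Hneg; apply negligible_incl; intros x; now rewrite Hcomb. }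
    destruct (skn_comb_independent k0 theta v m hv (fun h => HP (or_introl h))
                (fun h => HP (or_intror h)) a b c d H0 j hj); tauto.
  - intros HP; destruct (skn_comb_dependent k0 theta v m hv HP) as [a [b [c [d [Hnt Hz]]]]].
    exists a, b, c, d; split; [exact Hnt|].
    apply negligible_empty; intros x; now rewrite Hcomb, Hz.
Qed.
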